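(* Let $\Sigma$ be a set of prime numbers, $S$ the multiplicative submonoid of $\mathbb{N}$ generated by $\Sigma$, and $\mathbb{Z}[S^{-1}]\subset\mathbb{Q}$ the corresponding localization. Let $M$ be a locally compact topological $\mathbb{Z}[S^{-1}]$-module. Then $M$ is compactly generated if and only if its Pontryagin dual $\widehat{M}$ has the no small submodules property.
   Context: All topological modules are Hausdorff; $\mathbb{Z}[S^{-1}]$ is discrete; a locally compact topological $\mathbb{Z}[S^{-1}]$-module is a locally compact abelian group with a $\mathbb{Z}[S^{-1}]$-module structure with continuous scalar multiplication. $M$ is compactly generated if it is the submodule generated by some compact subset. $\widehat{M}$ is the group of continuous homomorphisms $M\to\mathbb{S}^1$ with the compact-open topology, a topological $\mathbb{Z}[S^{-1}]$-module via $\chi^r(m)=\chi(rm)$. A topological module has the no small submodules property if some neighbourhood of $0$ contains no nonzero submodule. *)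

From HB Require Import structures.
From mathcomp Require Import all_boot all_order all_algebra.
From mathcomp Require Import boolp classical_sets functions reals.
From mathcomp Require Import topology.
From mathcomp Require Import Rstruct.
From mathcomp Require Import ring lra.

Set Implicit Arguments.
Unset Strict Implicit.
Unset Printing Implicit Defensive.

Import Order.TTheory GRing.Theory Num.Theory.
Import numFieldTopology.Exports.
Local Open Scope classical_set_scope.
Local Open Scope ring_scope.

(** [in_S Sigma s]: s lies in the multiplicative submonoid of N generated by
    the set of primes Sigma (the primality condition is redundant under the
    standing hypothesis that Sigma consists of primes). *)
Inductive in_S (Sigma : set nat) : nat -> Prop :=
  | in_S1 : in_S Sigma 1
  | in_SM p n : Sigma p -> prime p -> in_S Sigma n -> in_S Sigma (p * n)%N.

Definition ZSinv (Sigma : set nat) (q : rat) : Prop :=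
  exists (a : int) (s : nat), in_S Sigma s /\ q = a%:~R / s%:R.

Definition ZSinvb (Sigma : set nat) : {pred rat} := fun q => `[< ZSinv Sigma q >].

Lemma in_S_gt0 Sigma s : in_S Sigma s -> (0 < s)%N.
Proof.
elim=> // p n _ pp _ IH; rewrite muln_gt0 IH andbT; exact: prime_gt0.
Qed.

Lemma in_S_mul Sigma s t : in_S Sigma s -> in_S Sigma t -> in_S Sigma (s * t)%N.
Proof.
elim=> [|p n Sp pp _ IH] Ht; first by rewrite mul1n.
by rewrite -mulnA; apply: in_SM => //; exact: IH.
Qed.

Lemma ZSinvb_subring_closed Sigma : subring_closed (ZSinvb Sigma).
Proof.
split.
- rewrite inE /ZSinv; exists 1, 1%N; split; first by constructor.
  by rewrite divr1.
- move=> x y Hx Hy.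
  have [a [s [Hs ->]]] : ZSinv Sigma x by move: Hx; rewrite inE.
  have [b [t [Ht ->]]] : ZSinv Sigma y by move: Hy; rewrite inE.
  rewrite inE /ZSinv; exists (a * t%:Z - b * s%:Z), (s * t)%N; split.
    exact: in_S_mul.
  have s0 : (s%:R : rat) != 0 by rewrite pnatr_eq0 -lt0n (in_S_gt0 Hs).
  have t0 : (t%:R : rat) != 0 by rewrite pnatr_eq0 -lt0n (in_S_gt0 Ht).
  rewrite natrM rmorphB !rmorphM /= -!pmulrn.
  by field; rewrite s0 t0.
- move=> x y Hx Hy.
  have [a [s [Hs ->]]] : ZSinv Sigma x by move: Hx; rewrite inE.
  have [b [t [Ht ->]]] : ZSinv Sigma y by move: Hy; rewrite inE.
  rewrite inE /ZSinv; exists (a * b), (s * t)%N; split.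
    exact: in_S_mul.
  have s0 : (s%:R : rat) != 0 by rewrite pnatr_eq0 -lt0n (in_S_gt0 Hs).
  have t0 : (t%:R : rat) != 0 by rewrite pnatr_eq0 -lt0n (in_S_gt0 Ht).
  rewrite natrM rmorphM /=.
  by field; rewrite s0 t0.
Qed.

HB.instance Definition _ Sigma :=
  GRing.isSubringClosed.Build rat (ZSinvb Sigma) (ZSinvb_subring_closed Sigma).

Definition ZS (Sigma : set nat) := {q : rat | q \in ZSinvb Sigma}.

HB.instance Definition _ Sigma := [isSub for (@sval rat (fun q => q \in ZSinvb Sigma)) : ZS Sigma -> rat].
HB.instance Definition _ Sigma := [Choice of ZS Sigma by <:].
HB.instance Definition _ Sigma := [SubChoice_isSubComNzRing of ZS Sigma by <:].

(** Continuity of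
    addition, negation and of the scalar multiplication (w.r.t. the discrete
    topology on the ring) are imposed as hypotheses in the theorem
    (see [is_topological_module]). *)
#[short(type="topLmodType")]
HB.structure Definition TopLmodule (R : pzRingType) :=
  {M of Topological M & GRing.Lmodule R M}.

Definition is_topological_module (R : pzRingType) (M : topLmodType R) : Prop :=
  [/\ continuous (fun x : M * M => x.1 + x.2),
      continuous (fun x : M => - x) &
      forall r : R, continuous (fun x : M => r *: x)].

Section Modules.
Context (R : pzRingType) (M : lmodType R).

Definition is_submodule (N : set M) : Prop :=
  [/\ N 0,
      (forall x y, N x -> N y -> N (x + y)) &
      (forall (r : R) x, N x -> N (r *: x))].

Definition generated_submodule (K : set M) : set M :=
  \bigcap_(N in [set N | is_submodule N /\ K `<=` N]) N.

End Modules.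

Definition compactly_generated (R : pzRingType) (M : topLmodType R) : Prop :=
  exists K : set M, compact K /\ generated_submodule K = [set: M].

Definition RR : realType := Rdefinitions.R.

(** The circle group S^1, realised as the unit circle in R x R = C
    (with the product topology), with complex multiplication. *)
Definition circle : set (RR * RR) :=
  [set z | z.1 ^+ 2 + z.2 ^+ 2 = 1].

Definition cmul (z w : RR * RR)
  : RR * RR :=
  (z.1 * w.1 - z.2 * w.2, z.1 * w.2 + z.2 * w.1).

Section Dual.
Context (R : pzRingType) (M : topLmodType R).

Definition co_space := {compact-open, M -> (RR * RR)%type}.

Definition is_character (chi : co_space) : Prop :=
  [/\ continuous (chi : M -> RR * RR),
      (forall m, circle (chi m)) &
      (forall a b, chi (a + b) = cmul (chi a) (chi b))].

Definition dual : set co_space := is_character.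

Definition dual_zero : co_space := fun _ => (1, 0).
Definition dual_add (chi psi : co_space) : co_space := fun m => cmul (chi m) (psi m).
Definition dual_scale (r : R) (chi : co_space) : co_space := fun m => chi (r *: m).

Definition is_dual_submodule (N : set co_space) : Prop :=
  [/\ N `<=` dual, N dual_zero,
      (forall chi psi, N chi -> N psi -> N (dual_add chi psi)) &
      (forall (r : R) chi, N chi -> N (dual_scale r chi))].

Definition dual_nss : Prop :=
  exists U : set co_space,
    within dual (nbhs dual_zero) U /\
    (forall N : set co_space, is_dual_submodule N -> N `<=` U -> N = [set dual_zero]).

End Dual.

From HB Require Import structures.
From mathcomp Require Import all_boot all_order all_algebra.
From mathcomp Require Import boolp classical_sets functions reals topology Rstruct.
From mathcomp Require Import trigo normedtype ring lra.

Set Implicit Arguments.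
Unset Strict Implicit.
Unset Printing Implicit Defensive.

Import Order.TTheory GRing.Theory Num.Theory numFieldTopology.Exports.
Local Open Scope classical_set_scope.
Local Open Scope ring_scope.

(* If a compact set K generates M, the characters sending K into the half-plane
   Re z > 1/2 form a neighbourhood of the trivial character.  A submodule inside it
   is closed under squaring, and a point of the circle stays in that half-plane under
   repeated squaring only if it is 1; so its characters are trivial on every r K,
   hence on the submodule generated by K, which is M.
   Conversely, an NSS neighbourhood contains all characters trivial on some compact
   set C.  If V is a compact neighbourhood of 0, the submodule M1 generated by C and V
   is open, so the characters trivial on M1 are continuous and form a submodule inside
   that neighbourhood: only the trivial one exists.  As R/Z is divisible, a
   Zorn's-lemma extension produces a character trivial on M1 and nontrivial at any
   given point outside M1; hence M1 = M. *)

Lemma cmulz1 z : cmul z (1, 0) = z.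
Proof. by case: z => x y; rewrite /cmul /=; congr pair; ring. Qed.

Lemma cmulACA z w u v : cmul (cmul z w) (cmul u v) = cmul (cmul z u) (cmul w v).
Proof.
case: z => a b; case: w => c d; case: u => e f; case: v => g h.
by rewrite /cmul /=; congr pair; ring.
Qed.

Lemma circle_cmul z w : circle z -> circle w -> circle (cmul z w).
Proof.
case: z => a b; case: w => c d; rewrite /circle /cmul /= => hz hw.
have -> : (a * c - b * d) ^+ 2 + (a * d + b * c) ^+ 2 =
  (a ^+ 2 + b ^+ 2) * (c ^+ 2 + d ^+ 2) by ring.
by rewrite hz hw mulr1.
Qed.

Lemma circle_idem z : circle z -> cmul z z = z -> z = (1, 0).
Proof.
case: z => a b; rewrite /circle /cmul /= => hc [ha hb].
have b0 : b = 0.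
  apply: contrapT => /eqP b_neq0.
  have a_half : a = 2^-1.
    have : b * (1 - 2 * a) = 0 by rewrite mulrBr mulr1; lra.
    by move/eqP; rewrite mulf_eq0 (negbTE b_neq0) /= subr_eq0 => /eqP; lra.
  by rewrite a_half in ha hc; nra.
by rewrite b0 in ha hc *; congr pair; nra.
Qed.

Definition circ_exp (t : RR) : RR * RR := (cos (pi *+ 2 * t), sin (pi *+ 2 * t)).

Lemma circle_circ_exp t : circle (circ_exp t).
Proof. exact: cos2Dsin2. Qed.

Lemma circ_expD s t : circ_exp (s + t) = cmul (circ_exp s) (circ_exp t).
Proof. by rewrite /circ_exp /cmul /= mulrDr cosD sinD; congr pair; ring. Qed.

Lemma circ_exp0 : circ_exp 0 = (1, 0).
Proof. by rewrite /circ_exp mulr0 cos0 sin0. Qed.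

Lemma circ_exp_int t : t \is a Num.int -> circ_exp t = (1, 0).
Proof.
have circ_exp_nat n : circ_exp n%:R = (1, 0).
  elim: n => [|n IH]; first exact: circ_exp0.
  by rewrite -natr1 circ_expD IH /circ_exp mulr1 cos2pi sin2pi; apply: cmulz1.
case/intrP=> -[] n ->; first exact: circ_exp_nat.
rewrite NegzE intrN -[LHS]cmulz1 -{1}(circ_exp_nat n.+1) -circ_expD addNr.
exact: circ_exp0.
Qed.

Lemma circ_exp_cong s t : s - t \is a Num.int -> circ_exp s = circ_exp t.
Proof. by move=> st; rewrite -(subrK t s) addrC circ_expD (circ_exp_int st) cmulz1. Qed.

Lemma circ_exp_invn (n : nat) : (2 <= n)%N -> circ_exp n%:R^-1 <> (1, 0).
Proof.
move=> n_ge2 [] cos1 _.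
have n_gt0 : (0 : RR) < n%:R by rewrite ltr0n (leq_trans _ n_ge2).
pose x : RR := pi / n%:R.
have double_x : pi *+ 2 * n%:R^-1 = x *+ 2 by rewrite /x mulr2n mulrDl -mulr2n.
move: cos1; rewrite double_x cos_mulr2n cos2sin2 => cos1.
have x_gt0 : 0 < x by rewrite /x divr_gt0 // pi_gt0.
have x_le : x <= pi / 2.
  by rewrite /x ler_wpM2l ?pi_ge0 // lef_pV2 ?posrE // (ler_nat RR 2 n).
have sin_x_gt0 : 0 < sin x.
  have [x_eq|x_neq] := eqVneq x (pi / 2); first by rewrite x_eq sin_pihalf.
  by apply: sin_gt0_pihalf; rewrite x_gt0 lt_neqAle x_neq x_le.
nra.
Qed.

Section PartialCharacters.
Variables (M : zmodType) (M1 : set M).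

Definition rdom (G : set (M * RR)) (x : M) := exists t, G (x, t).

(* A relation G rather than a function, so that unions of chains stay in the class:
   G is a homomorphism to R/Z, defined on a subgroup containing M1 and trivial on
   M1; composed with circ_exp it is a partial character trivial on M1. *)
Definition partial_char (G : set (M * RR)) :=
  [/\ M1 `<=` rdom G,
      (forall x y, rdom G x -> rdom G y -> rdom G (x - y)),
      (forall x y s t u, G (x, s) -> G (y, t) -> G (x + y, u) ->
         u - s - t \is a Num.int) &
      (forall h t, M1 h -> G (h, t) -> t \is a Num.int)].

Hypothesis M10 : M1 0.

Section PartialCharacterTheory.
Variable G : set (M * RR).
Hypothesis hG : partial_char G.

Lemma pc_dom1 h : M1 h -> rdom G h.
Proof. by case: hG => sub _ _ _; exact: sub. Qed.

Lemma pc_int h t : M1 h -> G (h, t) -> t \is a Num.int.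
Proof. by case: hG => _ _ _; exact. Qed.

Lemma pc_dom0 : rdom G 0.
Proof. exact: pc_dom1. Qed.

Lemma pc_int0 t : G (0, t) -> t \is a Num.int.
Proof. exact: pc_int. Qed.

Lemma pc_add x y s t u : G (x, s) -> G (y, t) -> G (x + y, u) -> u - s - t \is a Num.int.
Proof. by case: hG => _ _ + _; exact. Qed.

Lemma pc_uniq x s s' : G (x, s) -> G (x, s') -> s' - s \is a Num.int.
Proof.
move=> hs hs'; have [t0 h0] := pc_dom0.
have := pc_add hs h0; rewrite addr0 => /(_ _ hs') /rpredD /(_ (pc_int0 h0)).
by rewrite subrK.
Qed.

Lemma pc_domB x y : rdom G x -> rdom G y -> rdom G (x - y).
Proof. by case: hG => _ + _ _; exact. Qed.

Lemma pc_domN x : rdom G x -> rdom G (- x).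
Proof. by move=> hx; have := pc_domB pc_dom0 hx; rewrite sub0r. Qed.

Lemma pc_domD x y : rdom G x -> rdom G y -> rdom G (x + y).
Proof. by move=> hx hy; have := pc_domB hx (pc_domN hy); rewrite opprK. Qed.

Lemma pc_dom_mulrn x n : rdom G x -> rdom G (x *+ n).
Proof.
by move=> hx; elim: n => [|n IH]; [exact: pc_dom0 | rewrite mulrS; exact: pc_domD].
Qed.

Lemma pc_dom_mulrz x (q : int) : rdom G x -> rdom G (x *~ q).
Proof.
by case: q => n hx; rewrite ?NegzE ?mulrNz; [|apply: pc_domN]; exact: pc_dom_mulrn.
Qed.

Lemma pc_mulrn x s n c : G (x, s) -> G (x *+ n, c) -> c - n%:R * s \is a Num.int.
Proof.
move=> hs; elim: n c => [|n IH] c hc; first by rewrite mul0r subr0; exact: pc_int0.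
have [c' hc'] := pc_dom_mulrn n (ex_intro _ _ hs).
have step : c - c' - s \is a Num.int by apply: pc_add hc' hs _; rewrite -mulrSr.
have -> : c - n.+1%:R * s = (c - c' - s) + (c' - n%:R * s) by rewrite -natr1; ring.
by rewrite rpredD // IH.
Qed.

Lemma pc_mulrz x s (q : int) c : G (x, s) -> G (x *~ q, c) -> c - q%:~R * s \is a Num.int.
Proof.
case: q => n hs; first exact: pc_mulrn.
rewrite NegzE mulrNz -pmulrn => hc.
have [c' hc'] := pc_dom_mulrn n.+1 (ex_intro _ _ hs).
have [t0 h0] := pc_dom0.
have h0' : G (x *+ n.+1 + - (x *+ n.+1), t0) by rewrite addrN.
have -> : c - (- n.+1%:R) * s = t0 - (t0 - c' - c) - (c' - n.+1%:R * s) by ring.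
by rewrite rpredB ?(pc_mulrn hs hc') // rpredB ?(pc_int0 h0) ?(pc_add hc' hc h0').
Qed.

Lemma pc_mulrz_dvd x n (j : int) : (0 < n)%N -> rdom G (x *+ n) ->
  (forall m, (0 < m)%N -> rdom G (x *+ m) -> (n <= m)%N) ->
  rdom G (x *~ j) -> (n %| j)%Z.
Proof.
move=> n_gt0 dn nmin dj; apply/dvdz_mod0P.
have n_neq0 : n%:Z != 0 by rewrite eqz_nat -lt0n.
have dr : rdom G (x *~ (j %% n)%Z).
  have -> : x *~ (j %% n)%Z = x *~ j - (x *+ n) *~ (j %/ n)%Z.
    by rewrite /modz mulrzBr pmulrn mulrzA_C.
  by apply: pc_domB => //; apply: pc_dom_mulrz.
have := ltz_pmod j (n_gt0 : 0 < n%:Z); have := modz_ge0 j n_neq0.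
case: (j %% n)%Z dr => -[|r] // dr _; rewrite ltz_nat => r_lt.
by have := nmin r.+1 isT dr; rewrite leqNgt r_lt.
Qed.

End PartialCharacterTheory.

Definition compatible (G : set (M * RR)) (x : M) (w : RR) :=
  forall (j : int) c, G (x *~ j, c) -> c - j%:~R * w \is a Num.int.

Definition extend (G : set (M * RR)) (x : M) (w : RR) : set (M * RR) :=
  fun p => exists d s (k : int), [/\ G (d, s), p.1 = d + x *~ k & p.2 = s + k%:~R * w].

(* If n is least with x *+ n in the domain, with value c, the multiples of x in the
   domain are those of x *+ n, so a value w at x only has to satisfy n w = c mod Z. *)
Lemma compatible_spec G x : partial_char G ->
  (forall w, compatible G x w) \/
  exists2 n : nat, (0 < n)%N & exists2 c, G (x *+ n, c) &
    forall w, n%:R * w - c \is a Num.int -> compatible G x w.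
Proof.
move=> hG.
have [[n0 [n0_gt0 dn0]]|no_mult] := pselect (exists n, (0 < n)%N /\ rdom G (x *+ n)).
  right.
  have exP : exists n, (0 < n)%N && `[< rdom G (x *+ n) >].
    by exists n0; rewrite n0_gt0; apply/asboolP.
  case: (ex_minnP exP) => n /andP[n_gt0 /asboolP dn] nmin.
  have {}nmin m : (0 < m)%N -> rdom G (x *+ m) -> (n <= m)%N.
    by move=> m_gt0 dm; apply: nmin; rewrite m_gt0; apply/asboolP.
  have [c hc] := dn; exists n => //; exists c => // w hw j c' hc'.
  have /dvdzP[q j_eq] := pc_mulrz_dvd hG n_gt0 dn nmin (ex_intro _ _ hc').
  rewrite j_eq -mulrzA_C -pmulrn in hc'.
  have -> : c' - j%:~R * w = (c' - q%:~R * c) - q%:~R * (n%:R * w - c).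
    by rewrite j_eq intrM; ring.
  by rewrite rpredB ?rpredM ?intr_int // (pc_mulrz hG hc hc').
left=> w [] n c hc.
  case: n hc => [|n] hc.
    by rewrite mulr0z in hc; rewrite mul0r subr0 (pc_int0 hG hc).
  by case: no_mult; exists n.+1; split => //; exists c.
case: no_mult; exists n.+1; split => //.
by have := pc_domN hG (ex_intro _ c hc); rewrite NegzE mulrNz opprK.
Qed.

Section Extension.
Variables (G : set (M * RR)) (x : M) (w : RR).
Hypotheses (hG : partial_char G) (hw : compatible G x w).

Lemma compatible_shift d s d' s' (j : int) : G (d, s) -> G (d', s') ->
  d' = d + x *~ j -> s' - s - j%:~R * w \is a Num.int.
Proof.
move=> hs hs' d'_eq.
have [c hc] : rdom G (x *~ j).
  have -> : x *~ j = d' - d by rewrite d'_eq addrAC subrr add0r.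
  exact: (pc_domB hG (ex_intro _ s' hs') (ex_intro _ s hs)).
rewrite d'_eq in hs'.
have -> : s' - s - j%:~R * w = (s' - s - c) + (c - j%:~R * w) by ring.
by rewrite rpredD ?(pc_add hG hs hc hs') ?hw.
Qed.

Lemma extend_sub : G `<=` extend G x w.
Proof.
case=> y t hy; exists y, t, 0; split => //=; first by rewrite mulr0z addr0.
by rewrite mul0r addr0.
Qed.

Lemma extend_dom : rdom (extend G x w) x.
Proof.
have [s0 h0] := pc_dom0 hG; exists (s0 + w), 0, s0, 1.
by split => //=; rewrite ?add0r ?mul1r.
Qed.

Lemma extend_cong y u t : extend G x w (y, u) -> G (y, t) -> u - t \is a Num.int.
Proof.
move=> [d [s [k [hs /= y_eq ->]]]] ht.
have -> : s + k%:~R * w - t = - (t - s - k%:~R * w) by ring.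
by rewrite rpredN (compatible_shift hs ht y_eq).
Qed.

Lemma extend_partial_char : partial_char (extend G x w).
Proof.
split.
- by move=> h /(pc_dom1 hG) [t ht]; exists t; apply: extend_sub.
- move=> y1 y2 [u1 [d1 [s1 [k1 [h1 /= e1 _]]]]] [u2 [d2 [s2 [k2 [h2 /= e2 _]]]]].
  have [v hv] := pc_domB hG (ex_intro _ _ h1) (ex_intro _ _ h2).
  exists (v + (k1 - k2)%:~R * w), (d1 - d2), v, (k1 - k2); split => //=.
  by rewrite e1 e2 mulrzBr opprD addrACA.
- move=> y1 y2 u1 u2 u3 [d1 [s1 [k1 [h1 /= e1 f1]]]] [d2 [s2 [k2 [h2 /= e2 f2]]]]
    [d3 [s3 [k3 [h3 /= e3 f3]]]].
  have [v hv] := pc_domD hG (ex_intro _ _ h1) (ex_intro _ _ h2).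
  have d3_eq : d3 = d1 + d2 + x *~ (k1 + k2 - k3).
    apply: (addIr (x *~ k3)); rewrite -e3 e1 e2 mulrzBr mulrzDr.
    by rewrite [in RHS]addrA subrK addrACA.
  have -> : u3 - u1 - u2 = (s3 - v - (k1 + k2 - k3)%:~R * w) + (v - s1 - s2).
    by rewrite f1 f2 f3 !intrD intrN; ring.
  by rewrite rpredD ?(compatible_shift hv h3 d3_eq) ?(pc_add hG h1 h2 hv).
- move=> h u hh hu; have [t ht] := pc_dom1 hG hh.
  by rewrite -(subrK t u) rpredD ?(extend_cong hu ht) ?(pc_int hG hh ht).
Qed.

End Extension.

Lemma exists_compatible G x : partial_char G -> exists w, compatible G x w.
Proof.
move=> hG; case: (compatible_spec x hG) => [all_w|[n n_gt0 [c _ hn]]].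
  by exists 0.
exists (c / n%:R); apply: hn.
by rewrite mulrC divfK ?subrr ?rpred0 // pnatr_eq0 -lt0n.
Qed.

Hypothesis M1B : forall x y, M1 x -> M1 y -> M1 (x - y).

Definition zero_on_M1 : set (M * RR) := [set p | M1 p.1 /\ p.2 = 0].

Lemma zero_on_M1_partial_char : partial_char zero_on_M1.
Proof.
split.
- by move=> h hh; exists 0.
- by move=> x y [s [hx _]] [t [hy _]]; exists 0; split => //=; exact: M1B.
- by move=> x y s t u [_ /= ->] [_ /= ->] [_ /= ->]; rewrite !subr0 rpred0.
- by move=> h t _ [_ /= ->]; rewrite rpred0.
Qed.

Variable a : M.
Hypothesis M1Na : ~ M1 a.

Definition separating (G : set (M * RR)) :=
  [/\ partial_char G, rdom G a & forall t, G (a, t) -> circ_exp t <> (1, 0)].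

Lemma separating_extend G x : separating G -> exists w, separating (extend G x w).
Proof.
move=> [hG [ta hta] hN]; have [w hw] := exists_compatible x hG.
exists w; split; first exact: extend_partial_char.
  by exists ta; apply: extend_sub.
by move=> t ht; rewrite (circ_exp_cong (extend_cong hG hw ht hta)); exact: hN.
Qed.

Lemma exists_separating : exists G, separating G.
Proof.
have [w [hw w_neq1]] : exists w, compatible zero_on_M1 a w /\ circ_exp w <> (1, 0).
  case: (compatible_spec a zero_on_M1_partial_char) => [all_w|].
    by exists 2%:R^-1; split; [exact: all_w | exact: circ_exp_invn].
  move=> [n n_gt0 [c [/= M1na ->] hn]].
  have n_ge2 : (2 <= n)%N.
    by case: n n_gt0 M1na {hn} => [|[|n]] // _; rewrite mulr1n => /M1Na.
  exists n%:R^-1; split; last exact: circ_exp_invn.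
  by apply: hn; rewrite subr0 mulfV ?rpred1 // pnatr_eq0 -lt0n.
have hG := extend_partial_char zero_on_M1_partial_char hw.
exists (extend zero_on_M1 a w); split => //.
  exact: (extend_dom _ _ zero_on_M1_partial_char).
have haw : extend zero_on_M1 a w (a, w).
  by exists 0, 0, 1; split; rewrite /= ?add0r ?mul1r.
by move=> t ht; rewrite (circ_exp_cong (pc_uniq hG haw ht)).
Qed.

Lemma separating_bigcup (F : set (set (M * RR))) : F `<=` separating ->
  total_on F subset -> F !=set0 -> separating (\bigcup_(X in F) X).
Proof.
move=> Fsep Ftot [X0 FX0].
have ub X Y : F X -> F Y -> exists2 Z, F Z & X `|` Y `<=` Z.
  move=> FX FY; have [XY|YX] := Ftot X Y FX FY.
    by exists Y => // p [/XY|].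
  by exists X => // p [|/YX].
have pcF X : F X -> partial_char X by case/Fsep.
have [[dom1 _ _ _] [ta hta] _] := Fsep _ FX0.
split; [split| |].
- by move=> h /dom1 [t ht]; exists t, X0.
- move=> x y [s [X FX hx]] [t [Y FY hy]]; have [Z FZ XYZ] := ub X Y FX FY.
  have [u hu] : rdom Z (x - y).
    by apply: (pc_domB (pcF Z FZ)); [exists s | exists t]; apply: XYZ; [left|right].
  by exists u, Z.
- move=> x y s t u [X FX hx] [Y FY hy] [W FW hw].
  have [Z FZ XYZ] := ub X Y FX FY; have [Z' FZ' ZWZ'] := ub Z W FZ FW.
  have XYZ' p : X p \/ Y p -> Z' p by move=> XYp; apply: ZWZ'; left; exact: XYZ.
  apply: (pc_add (pcF Z' FZ') (XYZ' _ (or_introl hx)) (XYZ' _ (or_intror hy))).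
  by apply: ZWZ'; right.
- by move=> h t hh [X FX hx]; exact: (pc_int (pcF X FX) hh hx).
- by exists ta, X0.
- by move=> t [X FX hx]; have [_ _ N] := Fsep _ FX; exact: N hx.
Qed.

(* The empty set is admitted so that the empty chain has an upper bound. *)
Lemma exists_total_separating : exists G, separating G /\ forall y, rdom G y.
Proof.
pose P G := G = set0 \/ separating G.
have [A [PA Amax]] : exists A, P A /\ forall B, A `<` B -> ~ P B.
  apply: Zorn_bigcup => F FP Ftot.
  pose F' := [set X | F X /\ X != set0].
  have FF' : \bigcup_(X in F) X = \bigcup_(X in F') X.
    apply/seteqP; split=> p [X FX Xp]; last by exists X => //; case: FX.
    by exists X => //; split => //; apply/set0P; exists p.
  have [[X [FX X_neq0]]|F'0] := pselect (F' !=set0); last first.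
    left; rewrite FF'; apply/seteqP; split => // p [X F'X _].
    by case: F'0; exists X.
  right; rewrite FF'; apply: separating_bigcup.
  - by move=> Y [FY /eqP Y_neq0]; case: (FP _ FY).
  - by move=> Y Z [FY _] [FZ _]; exact: Ftot.
  - by exists X.
have [G0 sepG0] := exists_separating.
case: PA => [A0|sepA].
  case: (Amax G0); last by right.
  rewrite A0; split => // G0_sub; have [_ [t ht] _] := sepG0.
  exact: G0_sub _ ht.
exists A; split => // y; apply: contrapT => Ny.
have [w sepAw] := separating_extend y sepA.
apply: (Amax (extend A y w)); last by right.
split; first exact: extend_sub.
move=> Aw_sub; apply: Ny; have [hA _ _] := sepA.
by have [u hu] := extend_dom y w hA; exists u; exact: Aw_sub.
Qed.

Lemma exists_separating_character : exists chi : M -> RR * RR,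
  [/\ forall m, circle (chi m), forall x y, chi (x + y) = cmul (chi x) (chi y),
      forall h, M1 h -> chi h = (1, 0) & chi a <> (1, 0)].
Proof.
have [G [[hG _ hN] Gtot]] := exists_total_separating.
pose phi m := [get t | G (m, t)].
have Gphi m : G (m, phi m) by exact: (@getPex _ (fun t => G (m, t)) (Gtot m)).
exists (fun m => circ_exp (phi m)); split.
- by move=> m; exact: circle_circ_exp.
- move=> x y; rewrite -circ_expD; apply: circ_exp_cong.
  by rewrite opprD addrA (pc_add hG (Gphi x) (Gphi y) (Gphi (x + y))).
- by move=> h hh; apply: circ_exp_int; exact: (pc_int hG hh (Gphi h)).
- exact: hN.
Qed.

End PartialCharacters.

Section Submodules.
Variables (R : pzRingType) (M : lmodType R).

Lemma generated_submodule_min (K P : set M) :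
  is_submodule P -> K `<=` P -> generated_submodule K `<=` P.
Proof. by move=> hP KP x; apply; split. Qed.

Lemma sub_generated_submodule (K : set M) : K `<=` generated_submodule K.
Proof. by move=> x Kx N [_]; apply. Qed.

Lemma generated_submodule_is_submodule (K : set M) : is_submodule (generated_submodule K).
Proof.
split.
- by move=> N [[]].
- by move=> x y hx hy N hN; have [[_ hD _] _] := hN; apply: hD; [exact: hx | exact: hy].
- by move=> r x hx N hN; have [[_ _ hZ] _] := hN; apply: hZ; exact: hx.
Qed.

Lemma submoduleB (N : set M) x y : is_submodule N -> N x -> N y -> N (x - y).
Proof. by move=> [_ hD hZ] hx hy; rewrite -scaleN1r; apply/hD/hZ. Qed.

End Submodules.

Lemma double_angle_orbit_eq1 (x : nat -> RR) :
  (forall n, 2^-1 < x n <= 1) -> (forall n, x n.+1 = 2 * x n ^+ 2 - 1) -> x 0%N = 1.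
Proof.
move=> x_bound x_rec; pose d := 1 - x 0%N.
have d_ge0 : 0 <= d by rewrite subr_ge0; have /andP[] := x_bound 0%N.
(* 1 - x_(n+1) = 2 (1 - x_n) (1 + x_n) >= 3 (1 - x_n): the distance to 1 grows. *)
have dist_ge n : n.+1%:R * d <= 1 - x n.
  elim: n => [|n IH]; first by rewrite mul1r.
  have /andP[x_gt x_le] := x_bound n.
  have d_le : d <= 1 - x n by apply: le_trans IH; rewrite ler_peMl // ler1n.
  have : 0 <= n.+1%:R * d by apply: mulr_ge0.
  by rewrite x_rec -natr1; nra.
apply/eqP; rewrite eq_le; have /andP[_ -> /=] := x_bound 0%N.
rewrite -subr_le0 -/d leNgt; apply/negP => d_gt0.
pose n := Num.truncn d^-1.
have : 1 < n.+1%:R * d by rewrite -ltr_pdivrMr // div1r truncnS_gt.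
have := dist_ge n; have /andP[x_gt _] := x_bound n; lra.
Qed.

Lemma circle_iter_square_eq1 z : circle z ->
  (forall n, 2^-1 < (iter n (fun w => cmul w w) z).1) -> z = (1, 0).
Proof.
move=> z_circ half.
have iter_circ n : circle (iter n (fun w => cmul w w) z).
  by elim: n => //= n IH; exact: circle_cmul.
have z1 : z.1 = 1.
  apply: (double_angle_orbit_eq1 (x := fun n => (iter n (fun w => cmul w w) z).1)).
    move=> n; rewrite half /=; have := iter_circ n; rewrite /circle.
    by case: (iter n _ z) => a b /= ?; nra.
  move=> n /=; have := iter_circ n; rewrite /circle /cmul.
  by case: (iter n _ z) => a b /= ?; nra.
move: z_circ z1; rewrite /circle; case: z {half iter_circ} => a b /= circ a1.
by rewrite a1 in circ *; congr pair; nra.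
Qed.

Section CompactlyGeneratedDualNSS.
Variables (R : pzRingType) (M : topLmodType R).

Lemma dual_add_iter (psi : co_space M) n m :
  iter n (fun g => dual_add g g) psi m = iter n (fun z => cmul z z) (psi m).
Proof. by elim: n => //= n <-. Qed.

Lemma character_kernel_submodule (chi : co_space M) : is_character chi ->
  is_submodule [set m | forall r : R, chi (r *: m) = (1, 0)].
Proof.
move=> [_ chi_circ chi_mul]; split.
- by move=> r; rewrite scaler0; apply: circle_idem => //; rewrite -chi_mul addr0.
- by move=> x y hx hy r; rewrite scalerDr chi_mul hx hy cmulz1.
- by move=> r x hx s; rewrite scalerA; exact: hx.
Qed.

Definition half_plane : set (RR * RR) := [set z | 2^-1 < z.1].

Lemma open_half_plane : open half_plane.
Proof.
apply: (@open_comp _ _ fst [set x : RR | 2^-1 < x]); last exact: open_gt.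
by move=> z _; exact: cvg_fst.
Qed.

Lemma dual_submodule_trivial_on (K : set M) (N : set (co_space M)) :
  is_dual_submodule N -> N `<=` [set g | g @` K `<=` half_plane] ->
  forall psi k, N psi -> K k -> psi k = (1, 0).
Proof.
move=> [Ndual _ Nadd _] NK psi k Npsi Kk.
have Niter n : N (iter n (fun g => dual_add g g) psi).
  by elim: n => //= n IH; exact: Nadd.
have [_ psi_circ _] := Ndual _ Npsi.
apply: circle_iter_square_eq1 => // n; rewrite -dual_add_iter.
by apply: (NK _ (Niter n)); exists k.
Qed.

Lemma compactly_generated_dual_nss : compactly_generated M -> dual_nss M.
Proof.
move=> [K [cK genK]].
pose U := [set g : co_space M | g @` K `<=` half_plane].
exists U; split.
  apply: filterS (_ : nbhs (@dual_zero R M) U) => [g Ug _ //|].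
  apply: open_nbhs_nbhs; split; first exact: compact_open_open cK open_half_plane.
  by move=> z [k _ <-]; rewrite /half_plane /dual_zero /=; lra.
move=> N hN NU; apply/seteqP; split=> [chi Nchi|_ ->]; last by case: hN.
have [Ndual _ _ Nscale] := hN.
have chi_char := Ndual _ Nchi.
have K_ker : K `<=` [set m | forall r : R, chi (r *: m) = (1, 0)].
  by move=> k Kk r; exact: (dual_submodule_trivial_on hN NU (Nscale r _ Nchi) Kk).
apply/funext => m.
have := generated_submodule_min (character_kernel_submodule chi_char) K_ker.
by rewrite genK => /(_ m I 1); rewrite scale1r.
Qed.

End CompactlyGeneratedDualNSS.

Section DualNSSCompactlyGenerated.
Variables (R : pzRingType) (M : topLmodType R).

(* The characters trivial on a compact set form a filter base converging to the
   trivial character in the compact-open topology. *)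
Lemma dual_nbhs0_annihilates_compact (U : set (co_space M)) :
  within (@dual R M) (nbhs (@dual_zero R M)) U ->
  exists2 C : set M, compact C & forall g, dual g -> g @` C `<=` [set (1, 0)] -> U g.
Proof.
move=> hU.
pose trivial_on (C : set M) := [set g : co_space M | dual g /\ g @` C `<=` [set (1, 0)]].
pose F := filter_from [set C : set M | compact C] trivial_on.
have F_filter : Filter F.
  apply: filter_from_filter; first by exists set0; exact: compact0.
  move=> C1 C2 cC1 cC2; exists (C1 `|` C2); first exact: compactU.
  move=> g [dg hg]; split; split => // _ [k Ck <-].
    by apply: hg; exists k => //; left.
  by apply: hg; exists k => //; right.
have F_cvg : F --> (@dual_zero R M).
  apply/compact_open_cvgP => K O cK oO K0O.
  exists K => // g [_ hg] _ [k Kk <-].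
  by rewrite (hg (g k)); [apply: K0O; exists k | exists k].
have [C cC CU] := F_cvg _ hU.
by exists C => // g dg gC; apply: CU.
Qed.

Hypothesis hM : is_topological_module M.

Lemma cvg_subr_at (m : M) : (fun x => x - m) @ m --> (0 : M).
Proof.
have [addM _ _] := hM.
have pair_cvg : (fun x : M => (x, - m)) @ m --> (m, - m).
  by apply: cvg_pair; [exact: cvg_id | exact: cvg_cst].
by have := cvg_comp _ _ pair_cvg (addM (m, - m)); rewrite /= subrr.
Qed.

Lemma continuous_hom_trivial_near0 (V : set M) (chi : M -> RR * RR) : nbhs 0 V ->
  (forall x y, chi (x + y) = cmul (chi x) (chi y)) ->
  (forall v, V v -> chi v = (1, 0)) -> continuous chi.
Proof.
move=> V0 chi_mul chiV m; apply: cvg_near_cst.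
have : \forall x \near m, V (x - m) by exact: (cvg_subr_at m) V0.
apply: filterS => x Vxm.
by rewrite -(subrK m x) addrC chi_mul (chiV _ Vxm) cmulz1.
Qed.

Definition annihilator (M1 : set M) : set (co_space M) :=
  [set psi | [/\ forall m, circle (psi m),
                 forall x y, psi (x + y) = cmul (psi x) (psi y) &
                 forall h, M1 h -> psi h = (1, 0)]].

Lemma annihilator_dual_submodule (M1 : set M) : is_submodule M1 -> nbhs 0 M1 ->
  is_dual_submodule (annihilator M1).
Proof.
move=> [_ _ M1Z] M1_nbhs; split.
- move=> psi [psi_circ psi_mul psiM1]; split => //.
  exact: continuous_hom_trivial_near0 M1_nbhs psi_mul psiM1.
- split => [z|x y|h _]; rewrite /dual_zero /cmul /=; [rewrite /circle /=|congr pair|]; ring.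
- move=> psi phi [psi_circ psi_mul psiM1] [phi_circ phi_mul phiM1]; split.
  + by move=> x; exact: circle_cmul.
  + by move=> x y; rewrite /dual_add psi_mul phi_mul cmulACA.
  + by move=> h hh; rewrite /dual_add psiM1 // phiM1 // cmulz1.
- move=> r psi [psi_circ psi_mul psiM1]; split.
  + by move=> x; exact: psi_circ.
  + by move=> x y; rewrite /dual_scale scalerDr psi_mul.
  + by move=> h hh; apply: psiM1; exact: M1Z.
Qed.

Lemma dual_nss_compactly_generated : locally_compact [set: M] ->
  dual_nss M -> compactly_generated M.
Proof.
move=> lc [U [hU Usmall]].
have [C cC CU] := dual_nbhs0_annihilates_compact hU.
have [V] := lc 0 I; rewrite withinET => V0 [cV _].
exists (C `|` V); split; first exact: compactU.
pose M1 := generated_submodule (C `|` V).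
have M1sub : is_submodule M1 := @generated_submodule_is_submodule _ _ _.
have CVM1 : C `|` V `<=` M1 := @sub_generated_submodule _ _ _.
have M1_nbhs : nbhs 0 M1 by apply: filterS V0 => v Vv; apply: CVM1; right.
have ann_sub := annihilator_dual_submodule M1sub M1_nbhs.
have annU : annihilator M1 `<=` U.
  move=> psi ann_psi; have [dual_psi _ _ _] := ann_sub.
  apply: CU; first exact: dual_psi.
  by move=> _ [k Ck <-]; case: ann_psi => _ _ ->; last by apply: CVM1; left.
have ann0 := Usmall _ ann_sub annU.
apply/seteqP; split => // m _; apply: contrapT => M1Nm.
have [M10 _ _] := M1sub.
have [chi [chi_circ chi_mul chiM1 chi_m]] :=
  exists_separating_character M10 (fun x y => @submoduleB _ _ _ x y M1sub) M1Nm.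
have : annihilator M1 chi by [].
by rewrite ann0 => chi1; apply: chi_m; rewrite chi1.
Qed.

End DualNSSCompactlyGenerated.

(* Nothing specific to Z[S^-1] is used: the argument works over any discrete ring. *)
Theorem mainTheorem4 (Sigma : set nat) (HSigma : forall p, Sigma p -> prime p)
  (M : topLmodType (ZS Sigma)) :
  is_topological_module M ->
  hausdorff_space M ->
  locally_compact [set: M] ->
  (compactly_generated M <-> dual_nss M).
Proof.
move=> hM _ lc; split; first exact: compactly_generated_dual_nss.
exact: dual_nss_compactly_generated.
Qed.
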